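(* Let $\mathcal A$ be a small abelian category. The map $\mathsf{Cob}^b_0(\mathcal A)\to K_0^+(\mathcal A)$ sending the class of a positive $\mathcal A$-decorated 0-foam with points labelled $X_1,\dots,X_n$ to $[X_1]+\dots+[X_n]$ is a well-defined isomorphism of commutative monoids.
   Context: $K_0^+(\mathcal A)$ is the commutative monoid generated by symbols $[X]$, $X\in\mathrm{Ob}(\mathcal A)$, with relations $[X_2]=[X_1]+[X_3]$ for each short exact sequence $0\to X_1\to X_2\to X_3\to0$ (no inverses adjoined). A positive $\mathcal A$-decorated 0-foam is a finite set of points, each labelled by an object of $\mathcal A$ (and carrying the sign $+$). An $\mathcal A$-decorated 1-foam is a finite oriented graph with trivalent interior vertices. Each vertex is either ''in'' (two edges in, one out) or ''out'' (one in, two out); the two edges of equal orientation type are thin and the third is thick. The foam carries a flat connection with fibers in $\mathcal A$. At each vertex the thin edges are ordered (first, second), and a short exact sequence $0\to X_{\mathrm{first}}\to X_{\mathrm{thick}}\to X_{\mathrm{second}}\to0$ of nearby fibers is fixed. A braid-like cobordism from a positive 0-foam $M_0$ to a positive 0-foam $M_1$ is an $\mathcal A$-decorated 1-foam $U$ with boundary $M_0\sqcup M_1$, together with a continuous function $h:U\to[0,1]$ satisfying: - $h^{-1}(0)=M_0$ and $h^{-1}(1)=M_1$; - $h$ is strictly increasing along every edge in the direction of its orientation. In particular there are no local maxima or minima, and every edge is oriented from $M_0$ towards $M_1$. $\mathsf{Cob}^b_0(\mathcal A)$ is the set of positive $\mathcal A$-decorated 0-foams modulo the equivalence relation generated by the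 existence of a braid-like cobordism. It is a commutative monoid under disjoint union. *)

From HB Require Import structures.
From mathcomp Require Import all_boot all_algebra.
From Stdlib Require Import Reals Relations Permutation.

Import GRing.Theory.

(* Preadditive category data: objects, abelian groups of morphisms,    *)
(* identities, composition (written in diagrammatic order:             *)
(* comp f g = "first f, then g").                                      *)
Record PreCat := {
  Ob : Type;
  Hom : Ob -> Ob -> zmodType;
  idm : forall X : Ob, Hom X X;
  comp : forall X Y Z : Ob, Hom X Y -> Hom Y Z -> Hom X Z
}.

Arguments Ob : clear implicits.
Arguments Hom {p} X Y.
Arguments idm {p} X.
Arguments comp {p X Y Z} f g.

Section Abelian.
Variable C : PreCat.

Local Open Scope ring_scope.

Definition is_zero_obj (Z : Ob C) : Prop :=
  (forall (Y : Ob C) (f : Hom Z Y), f = 0) /\ (forall (Y : Ob C) (f : Hom Y Z), f = 0).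

Definition mono {X Y : Ob C} (f : Hom X Y) : Prop :=
  forall (W : Ob C) (g h : Hom W X), comp g f = comp h f -> g = h.

Definition epi {X Y : Ob C} (f : Hom X Y) : Prop :=
  forall (W : Ob C) (g h : Hom Y W), comp f g = comp f h -> g = h.

Definition is_kernel {X Y K : Ob C} (f : Hom X Y) (k : Hom K X) : Prop :=
  comp k f = 0 /\
  forall (W : Ob C) (g : Hom W X), comp g f = 0 -> exists! u : Hom W K, comp u k = g.

Definition is_cokernel {X Y Q : Ob C} (f : Hom X Y) (q : Hom Y Q) : Prop :=
  comp f q = 0 /\
  forall (W : Ob C) (g : Hom Y W), comp f g = 0 -> exists! u : Hom Q W, comp q u = g.

Definition is_biproduct {X Y P : Ob C}
  (i1 : Hom X P) (i2 : Hom Y P) (p1 : Hom P X) (p2 : Hom P Y) : Prop :=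
  [/\ comp i1 p1 = idm X, comp i2 p2 = idm Y, comp i1 p2 = 0, comp i2 p1 = 0
    & comp p1 i1 + comp p2 i2 = idm P].

Definition is_iso {X Y : Ob C} (f : Hom X Y) : Prop :=
  exists g : Hom Y X, comp f g = idm X /\ comp g f = idm Y.

(* An abelian category (the objects form a type, i.e. it is small). *)
Record is_abelian : Prop := {
  comp_idl : forall (X Y : Ob C) (f : Hom X Y), comp (idm X) f = f;
  comp_idr : forall (X Y : Ob C) (f : Hom X Y), comp f (idm Y) = f;
  comp_assoc : forall (X Y Z W : Ob C) (f : Hom X Y) (g : Hom Y Z) (h : Hom Z W),
      comp f (comp g h) = comp (comp f g) h;
  comp_addl : forall (X Y Z : Ob C) (f g : Hom X Y) (h : Hom Y Z),
      comp (f + g) h = comp f h + comp g h;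
  comp_addr : forall (X Y Z : Ob C) (f : Hom X Y) (g h : Hom Y Z),
      comp f (g + h) = comp f g + comp f h;
  has_zero : exists Z : Ob C, is_zero_obj Z;
  has_biproducts : forall X Y : Ob C, exists (P : Ob C) (i1 : Hom X P)
      (i2 : Hom Y P) (p1 : Hom P X) (p2 : Hom P Y), is_biproduct i1 i2 p1 p2;
  has_kernels : forall (X Y : Ob C) (f : Hom X Y), exists K (k : Hom K X), is_kernel f k;
  has_cokernels : forall (X Y : Ob C) (f : Hom X Y),
      exists Q (q : Hom Y Q), is_cokernel f q;
  mono_is_kernel : forall (X Y : Ob C) (f : Hom X Y),
      mono f -> exists Z (g : Hom Y Z), is_kernel g f;
  epi_is_cokernel : forall (X Y : Ob C) (g : Hom X Y),
      epi g -> exists Z (f : Hom Z X), is_cokernel f g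
}.

Definition is_ses {X1 X2 X3 : Ob C} (f : Hom X1 X2) (g : Hom X2 X3) : Prop :=
  is_kernel g f /\ is_cokernel f g.

Definition ses_exists (X1 X2 X3 : Ob C) : Prop :=
  exists (f : Hom X1 X2) (g : Hom X2 X3), is_ses f g.

(* K_0^+(A): the commutative monoid presented by generators [X] and    *)
(* relations [X2] = [X1] + [X3] for short exact sequences.  Elements   *)
(* of the free commutative monoid on Ob are lists up to permutation;   *)
(* K0eq is the monoid congruence generated by the relations, so        *)
(* K_0^+(A) = seq (Ob C) / K0eq, the class of [:: X1; ..; Xn] being    *)
(* [X1] + ... + [Xn], and the monoid law being concatenation.          *)
Inductive K0step : seq (Ob C) -> seq (Ob C) -> Prop :=
| K0_perm s t : Permutation s t -> K0step s t
| K0_ses (l r : seq (Ob C)) (X1 X2 X3 : Ob C) :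
    ses_exists X1 X2 X3 -> K0step (l ++ X2 :: r) (l ++ X1 :: X3 :: r).

Definition K0eq : seq (Ob C) -> seq (Ob C) -> Prop :=
  clos_refl_sym_trans (seq (Ob C)) K0step.

(* Positive A-decorated 0-foams: a finite set of points labelled by    *)
(* objects (all with sign +).                                          *)
Record Foam0 := { pts : finType; lab : pts -> Ob C }.

Definition labels (M : Foam0) : seq (Ob C) := map (@lab M) (enum (pts M)).

Definition foam_union (M N : Foam0) : Foam0 :=
  {| pts := (pts M + pts N)%type;
     lab := fun x => match x with inl a => @lab M a | inr b => @lab N b end |}.

Definition foam_empty : Foam0 := {| pts := void; lab := fun x => match x with end |}.

(* Braid-like cobordisms, as combinatorial 1-foams.                    *)
(* Nodes of the graph: the points of M0, the interior vertices V, and  *)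
(* the points of M1.  Edges are oriented src -> tgt.  The flat         *)
(* connection is recorded by one fiber object per edge (fibers along   *)
(* an edge are identified by the connection), and at each boundary     *)
(* point the label is isomorphic to the fiber of the adjacent edge.    *)
Record BraidCob (M0 M1 : Foam0) := {
  cV : finType;
  cE : finType;
  csrc : cE -> (pts M0 + (cV + pts M1))%type;
  ctgt : cE -> (pts M0 + (cV + pts M1))%type;
  fiber : cE -> Ob C;
  height : cV -> R;
  vin : cV -> bool;                   (* true: "in" vertex, false: "out" vertex *)
  vfst : cV -> cE;
  vsnd : cV -> cE;
  vthk : cV -> cE;
  bdry0 : forall p : pts M0, exists e, csrc e = inl p /\
            forall e', (csrc e' = inl p \/ ctgt e' = inl p) -> e' = e;
  bdry1 : forall q : pts M1, exists e, ctgt e = inr (inr q) /\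
            forall e', (csrc e' = inr (inr q) \/ ctgt e' = inr (inr q)) -> e' = e;
  bdry0_iso : forall (p : pts M0) e, csrc e = inl p ->
            exists f : Hom (@lab M0 p) (fiber e), is_iso f;
  bdry1_iso : forall (q : pts M1) e, ctgt e = inr (inr q) ->
            exists f : Hom (fiber e) (@lab M1 q), is_iso f;
  v_distinct : forall v, [/\ vfst v <> vsnd v, vfst v <> vthk v & vsnd v <> vthk v];
  v_incident : forall v, if vin v then
        [/\ ctgt (vfst v) = inr (inl v), ctgt (vsnd v) = inr (inl v)
          & csrc (vthk v) = inr (inl v)]
      else
        [/\ csrc (vfst v) = inr (inl v), csrc (vsnd v) = inr (inl v)
          & ctgt (vthk v) = inr (inl v)];
  v_only : forall v e, (csrc e = inr (inl v) \/ ctgt e = inr (inl v)) ->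
        [\/ e = vfst v, e = vsnd v | e = vthk v];
  v_ses : forall v, ses_exists (fiber (vfst v)) (fiber (vthk v)) (fiber (vsnd v));
  (* height function: h^-1(0) = M0, h^-1(1) = M1, strictly increasing
     along every edge in the direction of its orientation *)
  h_range : forall v, Rlt R0 (height v) /\ Rlt (height v) R1;
  h_incr : forall e,
      Rlt (match csrc e with inl _ => R0 | inr (inl v) => height v | inr (inr _) => R1 end)
          (match ctgt e with inl _ => R0 | inr (inl v) => height v | inr (inr _) => R1 end)
}.

Definition cob_equiv : Foam0 -> Foam0 -> Prop :=
  clos_refl_sym_trans Foam0 (fun M N => inhabited (BraidCob M N)).

End Abelian.

Arguments foam_empty {C}.
Arguments labels {C} M.
Arguments foam_union {C} M N.
Arguments K0eq {C}.
Arguments cob_equiv {C}.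
Arguments ses_exists {C}.

(* Sweeping the height function of a braid-like cobordism upwards through its
   interior vertices one at a time, the fibers of the edges crossing the level
   line change only at a vertex, where the fiber of the thick edge is traded for
   those of the two thin edges: this is a defining relation of K_0^+.  At the two
   ends the crossing fibers are isomorphic to the boundary labels, and isomorphic
   objects have the same class since [X] = [X] + [0].  Conversely, each generator
   of the congruence defining K_0^+ is realised by a cobordism: a permutation of
   the labels by parallel strands, a short exact sequence by a single vertex
   splitting one strand in two.  Surjectivity and additivity are immediate, as
   labels turns disjoint union into concatenation. *)

From Pilot Require Import Defs.
From mathcomp Require Import all_boot all_algebra.
From Stdlib Require Import Relations Permutation Reals Lra.
(* Re-imported so that Defs.comp and Defs.idm shadow the ssrfun names. *)
Import Defs.

Set Implicit Arguments.
Unset Strict Implicit.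
Unset Printing Implicit Defensive.
Import GRing.Theory.

Arguments is_iso {C X Y} f.
Arguments is_zero_obj {C} Z.
Arguments rst_step {A R x y}.
Arguments rst_refl {A R x}.
Arguments rst_sym {A R x y}.
Arguments rst_trans {A R x} y {z}.
Arguments pts {C} f.
Arguments lab {C} f _.
Arguments cV {C M0 M1} b.
Arguments cE {C M0 M1} b.
Arguments csrc {C M0 M1} b _.
Arguments ctgt {C M0 M1} b _.
Arguments fiber {C M0 M1} b _.
Arguments height {C M0 M1} b _.
Arguments vin {C M0 M1} b _.
Arguments vfst {C M0 M1} b _.
Arguments vsnd {C M0 M1} b _.
Arguments vthk {C M0 M1} b _.
Arguments bdry0 {C M0 M1} b p.
Arguments bdry1 {C M0 M1} b q.
Arguments bdry0_iso {C M0 M1} b p e _.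
Arguments bdry1_iso {C M0 M1} b q e _.
Arguments v_distinct {C M0 M1} b v.
Arguments v_incident {C M0 M1} b v.
Arguments v_only {C M0 M1} b v e _.
Arguments v_ses {C M0 M1} b v.
Arguments h_range {C M0 M1} b v.
Arguments h_incr {C M0 M1} b e.

Lemma PermutationP (T : eqType) (s t : seq T) : reflect (Permutation s t) (perm_eq s t).
Proof.
apply: (iffP idP) => [|st]; last first.
  elim: st => // [x s1 t1 _ p1 | x y s1 | s1 s2 s3 _ p12 _ p23].
  - by rewrite perm_cons.
  - by rewrite (perm_catCA [:: y] [:: x]).
  - exact: seq.perm_trans p23.
elim: s t => [|x s IH] t; first by rewrite perm_sym => /perm_nilP ->.
move=> pst; have xt : x \in t by rewrite -(perm_mem pst) mem_head.
case/splitPr: xt pst => t1 t2 pst; apply/Permutation_cons_app/IH.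
by rewrite -(perm_cons x) (seq.perm_trans pst) // -cat1s perm_catCA.
Qed.

Lemma Permutation_map_bij (T : Type) (P Q : finType) (lp : P -> T) (lq : Q -> T) :
  Permutation (map lp (enum P)) (map lq (enum Q)) ->
  exists2 g : P -> Q, bijective g & forall p, lq (g p) = lp p.
Proof.
case/Permutation_map_inv=> s [lpq perm_s].
have {}lpq : map lp (enum P) = map lq s := lpq.
have size_s : size s == #|P| by rewrite -(size_map lq) -lpq size_map -cardE.
pose t := Tuple size_s.
have uniq_t : uniq t by rewrite -(perm_uniq (introT (PermutationP _ _) perm_s)) enum_uniq.
exists (fun p => tnth t (enum_rank p)).
  apply: inj_card_bij; first exact: inj_comp (tuple_uniqP _ uniq_t) enum_rank_inj.
  by rewrite [#|Q|]cardE (Permutation_length perm_s : size _ = size _) (eqP size_s).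
move=> p; rewrite -tnth_map (tnth_nth (lp p)) /= -lpq (nth_map p) ?nth_enum_rank //.
by rewrite -cardE ltn_ord.
Qed.

Lemma exists_max_seq (T : eqType) (f : T -> R) (s : seq T) (x0 : T) :
  x0 \in s -> exists2 x, x \in s & forall y, y \in s -> Rle (f y) (f x).
Proof.
elim: s x0 => [|a s IH] x0 //= _.
case: s IH => [|b s] IH.
  by exists a => [|y]; rewrite ?mem_head // inE => /eqP ->; lra.
have [x xs x_max] := IH b (mem_head _ _).
case: (Rle_dec (f a) (f x)) => [fa_le | fa_gt].
  exists x; first by rewrite inE xs orbT.
  by move=> y; rewrite inE => /orP [/eqP ->|/x_max].
exists a; first exact: mem_head.
move=> y; rewrite inE => /orP [/eqP ->|/x_max]; lra.
Qed.

Section K0.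
Variables (C : PreCat) (HC : is_abelian C).
Local Open Scope ring_scope.

Lemma K0step_ctx (a b s t : seq (Ob C)) :
  K0step C s t -> K0step C (a ++ s ++ b) (a ++ t ++ b).
Proof.
case=> [s0 t0 st | l r X1 X2 X3 ses].
  by apply: K0_perm; apply: Permutation_app_head; apply: Permutation_app_tail.
have reassoc Y (m : seq (Ob C)) : a ++ (l ++ Y :: m ++ r) ++ b = (a ++ l) ++ Y :: m ++ r ++ b.
  by rewrite -!catA /= -!catA.
by rewrite (reassoc X2 [::]) (reassoc X1 [:: X3]); apply: K0_ses.
Qed.

Lemma K0eq_ctx (a b s t : seq (Ob C)) : K0eq s t -> K0eq (a ++ s ++ b) (a ++ t ++ b).
Proof.
elim=> [x y st | x | x y _ IH | x y z _ IH1 _ IH2].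
- exact/rst_step/K0step_ctx.
- exact: rst_refl.
- exact: rst_sym.
- exact: rst_trans _ IH1 IH2.
Qed.

Lemma K0eq_cat (s s' t t' : seq (Ob C)) : K0eq s s' -> K0eq t t' -> K0eq (s ++ t) (s' ++ t').
Proof.
move=> ss' tt'; apply: (rst_trans (s' ++ t)); first exact: (K0eq_ctx [::] t ss').
by have := K0eq_ctx s' [::] tt'; rewrite !cats0.
Qed.

Lemma K0eq_Permutation (s t : seq (Ob C)) : Permutation s t -> K0eq s t.
Proof. by move=> st; apply/rst_step/K0_perm. Qed.

Lemma comp0l (X Y Z : Ob C) (f : Hom Y Z) : comp (0 : Hom X Y) f = 0.
Proof.
apply: (addrI (comp (0 : Hom X Y) f)).
by rewrite -(comp_addl _ HC) !addr0.
Qed.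

Lemma comp0r (X Y Z : Ob C) (f : Hom X Y) : comp f (0 : Hom Y Z) = 0.
Proof.
apply: (addrI (comp f (0 : Hom Y Z))).
by rewrite -(comp_addr _ HC) !addr0.
Qed.

Definition isomorphic (X Y : Ob C) : Prop := exists f : Hom X Y, is_iso f.

Lemma is_iso_idm (X : Ob C) : is_iso (idm X).
Proof. by exists (idm X); split; apply: (comp_idl _ HC). Qed.

Lemma isomorphic_refl (X : Ob C) : isomorphic X X.
Proof. exists (idm X); exact: is_iso_idm. Qed.

Lemma isomorphic_sym (X Y : Ob C) : isomorphic X Y -> isomorphic Y X.
Proof. by move=> [f [g [fg gf]]]; exists g; exists f. Qed.

Lemma ses_iso_zero (X Y Z : Ob C) (f : Hom X Y) :
  is_zero_obj Z -> is_iso f -> ses_exists X Y Z.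
Proof.
move=> [Z_initial _] [g [fg gf]].
exists f, 0; split; split; first exact: comp0r.
- move=> W h _; exists (comp h g); split.
    by rewrite -(comp_assoc _ HC) gf (comp_idr _ HC).
  by move=> u <-; rewrite -(comp_assoc _ HC) fg (comp_idr _ HC).
- exact: comp0r.
- move=> W h fh; exists 0; split; last by move=> u _; rewrite (Z_initial _ u).
  by rewrite comp0l -[h](comp_idl _ HC) -gf -(comp_assoc _ HC) fh comp0r.
Qed.

(* Both [X] and [Y] equal [X] + [0]. *)
Lemma K0eq_iso (X Y : Ob C) : isomorphic X Y -> K0eq [:: X] [:: Y].
Proof.
move=> [f iso_f]; have [Z zero_Z] := has_zero _ HC.
apply: (rst_trans [:: X; Z]).
  by apply/rst_step/(@K0_ses C [::] [::])/(ses_iso_zero zero_Z (is_iso_idm X)).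
by apply/rst_sym/rst_step/(@K0_ses C [::] [::])/(ses_iso_zero zero_Z iso_f).
Qed.

Lemma K0eq_map_iso (T : Type) (l : seq T) (f g : T -> Ob C) :
  (forall x, isomorphic (f x) (g x)) -> K0eq (map f l) (map g l).
Proof.
move=> fg; elim: l => [|x l IH] /=; first exact: rst_refl.
exact: (K0eq_cat (K0eq_iso (fg x)) IH).
Qed.

Lemma K0eq_reindex (P E : finType) (lp : P -> Ob C) (fib : E -> Ob C) (a : pred E)
    (ep : P -> E) :
  injective ep -> (forall e, a e <-> exists p, e = ep p) ->
  (forall p, isomorphic (lp p) (fib (ep p))) ->
  K0eq (map lp (enum P)) (map fib [seq e <- enum E | a e]).
Proof.
move=> inj_ep a_ep iso_ep.
have perm_a : perm_eq (map ep (enum P)) [seq e <- enum E | a e].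
  apply: uniq_perm => [||e]; first by rewrite (map_inj_uniq inj_ep) enum_uniq.
    exact/filter_uniq/enum_uniq.
  rewrite mem_filter mem_enum andbT; apply/mapP/idP => [[p _ ->]|/a_ep [p ->]].
    by apply/a_ep; exists p.
  by exists p; rewrite ?mem_enum.
apply: (rst_trans (map (fib \o ep) (enum P))); first exact: K0eq_map_iso.
by rewrite map_comp; apply/K0eq_Permutation/Permutation_map/PermutationP.
Qed.

End K0.

Section Sweep.
Variables (C : PreCat) (HC : is_abelian C) (M0 M1 : Foam0 C) (B : BraidCob C M0 M1).

Local Notation V := (cV B).
Local Notation E := (cE B).
Local Notation src := (csrc B).
Local Notation tgt := (ctgt B).
Local Notation fib := (fiber B).
Local Notation ht := (height B).
Local Notation node := (pts M0 + (V + pts M1))%type.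
Local Notation vnode v := (@inr (pts M0) _ (@inl V (pts M1) v)).

Definition node_height (n : node) : R :=
  match n with inl _ => R0 | inr (inl v) => ht v | inr (inr _) => R1 end.

Lemma node_height_edge e : Rlt (node_height (src e)) (node_height (tgt e)).
Proof. exact: h_incr. Qed.

Lemma src_neq_tgt e : src e <> tgt e.
Proof. by move=> st; have := node_height_edge e; rewrite st; lra. Qed.

Lemma tgt_neq_M0 e p : tgt e <> inl p.
Proof.
move=> tp; have := node_height_edge e; rewrite tp /=.
by case: (src e) => [?|[w|?]] /=; try have := h_range B w; lra.
Qed.

Lemma src_neq_M1 e q : src e <> inr (inr q).
Proof.
move=> sq; have := node_height_edge e; rewrite sq /=.
by case: (tgt e) => [?|[w|?]] /=; try have := h_range B w; lra.
Qed.

(* The nodes lying below a sweep line that has passed exactly the vertices in S. *)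
Definition below (S : {set V}) (n : node) : bool :=
  match n with inl _ => true | inr (inl v) => v \in S | inr (inr _) => false end.

Definition crossing (S : {set V}) (e : E) : bool :=
  below S (src e) && ~~ below S (tgt e).

Definition cut (S : {set V}) : seq E := [seq e <- enum E | crossing S e].

Definition down_closed (S : {set V}) : Prop :=
  forall e v, tgt e = vnode v -> v \in S -> below S (src e).

Lemma below_tgt S e : below S (tgt e) = (if tgt e is inr (inl w) then w \in S else false).
Proof. by case te: (tgt e) => [p|[w|q]] //; have := tgt_neq_M0 te. Qed.

Lemma below_setT_src e : below setT (src e).
Proof. by case se: (src e) => [p|[w|q]] //=; rewrite ?in_setT //; have := src_neq_M1 se. Qed.

Lemma cut_set0 : K0eq (labels M0) (map fib (cut set0)).
Proof.
have edge_from p : exists e, src e == inl p.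
  by have [e [se _]] := bdry0 B p; exists e; apply/eqP.
have src_edge_from p : src (xchoose (edge_from p)) = inl p.
  exact/eqP/(xchooseP (edge_from p)).
apply: (K0eq_reindex HC (ep := fun p => xchoose (edge_from p))).
- by move=> p p' eqp; move: (src_edge_from p); rewrite eqp src_edge_from => -[].
- move=> e; rewrite /crossing below_tgt; split.
    case se: (src e) => [p|[w|q]] //=; rewrite ?in_set0 // => _; exists p.
    have [e0 [_ uniq_e0]] := bdry0 B p.
    by rewrite (uniq_e0 e (or_introl se)) (uniq_e0 _ (or_introl (src_edge_from p))).
  move=> [p ->]; rewrite src_edge_from /=.
  by case: (tgt _) => [?|[w|?]] //; rewrite in_set0.
- by move=> p; apply: (bdry0_iso B); apply: src_edge_from.
Qed.

Lemma cut_setT : K0eq (labels M1) (map fib (cut setT)).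
Proof.
have edge_to q : exists e, tgt e == inr (inr q).
  by have [e [te _]] := bdry1 B q; exists e; apply/eqP.
have tgt_edge_to q : tgt (xchoose (edge_to q)) = inr (inr q).
  exact/eqP/(xchooseP (edge_to q)).
apply: (K0eq_reindex HC (ep := fun q => xchoose (edge_to q))).
- by move=> q q' eqq; move: (tgt_edge_to q); rewrite eqq tgt_edge_to => -[].
- move=> e; rewrite /crossing below_setT_src below_tgt /=; split.
    case te: (tgt e) => [p|[w|q]] /=; first by have := tgt_neq_M0 te.
      by rewrite in_setT.
    move=> _; exists q.
    have [e0 [_ uniq_e0]] := bdry1 B q.
    by rewrite (uniq_e0 e (or_intror te)) (uniq_e0 _ (or_intror (tgt_edge_to q))).
  by move=> [q ->]; rewrite tgt_edge_to.
- by move=> q; apply/isomorphic_sym/(bdry1_iso B); apply: tgt_edge_to.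
Qed.

Definition in_edges (v : V) : seq E :=
  if vin B v then [:: vfst B v; vsnd B v] else [:: vthk B v].

Definition out_edges (v : V) : seq E :=
  if vin B v then [:: vthk B v] else [:: vfst B v; vsnd B v].

Lemma K0eq_vertex v : K0eq (map fib (in_edges v)) (map fib (out_edges v)).
Proof.
have ses := v_ses B v; rewrite /in_edges /out_edges; case: (vin B v).
  exact/rst_sym/rst_step/(@K0_ses C [::] [::]).
exact/rst_step/(@K0_ses C [::] [::]).
Qed.

Lemma edges_uniq v : uniq (in_edges v) /\ uniq (out_edges v).
Proof.
have [d12 d13 d23] := v_distinct B v; rewrite /in_edges /out_edges.
by case: (vin B v); rewrite /= ?inE ?andbT; split => //; apply/eqP.
Qed.

Lemma in_edges_tgt v e : e \in in_edges v -> tgt e = vnode v.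
Proof.
move: (v_incident B v); rewrite /in_edges.
case: (vin B v) => -[h1 h2 h3]; rewrite !inE; first by case/orP=> /eqP->.
by move/eqP->.
Qed.

Lemma out_edges_src v e : e \in out_edges v -> src e = vnode v.
Proof.
move: (v_incident B v); rewrite /out_edges.
case: (vin B v) => -[h1 h2 h3]; rewrite !inE; first by move/eqP->.
by case/orP=> /eqP->.
Qed.

Lemma incident_edges v e :
  src e = vnode v \/ tgt e = vnode v -> e \in in_edges v ++ out_edges v.
Proof.
case/(v_only B v e) => ->; rewrite /in_edges /out_edges.
all: by case: (vin B v); rewrite !inE eqxx ?orbT.
Qed.

Lemma mem_in_edges v e : (e \in in_edges v) = (tgt e == vnode v).
Proof.
apply/idP/eqP => [/in_edges_tgt // | te].
have := incident_edges (or_intror te); rewrite mem_cat => /orP[// | /out_edges_src se].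
by case: (src_neq_tgt (e := e)); rewrite se te.
Qed.

Lemma mem_out_edges v e : (e \in out_edges v) = (src e == vnode v).
Proof.
apply/idP/eqP => [/out_edges_src // | se].
have := incident_edges (or_introl se); rewrite mem_cat => /orP[/in_edges_tgt te | //].
by case: (src_neq_tgt (e := e)); rewrite se te.
Qed.

Section RemoveTop.
Variables (S : {set V}) (v : V).
Hypotheses (vS : v \in S) (closedS : down_closed S)
  (v_top : forall w, w \in S -> Rle (ht w) (ht v)).

Local Notation S' := (S :\ v).

Lemma below_setD1 n : n != vnode v -> below S' n = below S n.
Proof.
case: n => [p|[w|q]] //=; case: (w =P v) => [-> | wv]; first by rewrite eqxx.
by rewrite in_setD1 (introF eqP wv).
Qed.

Lemma crossing_out e : src e = vnode v -> crossing S e && ~~ crossing S' e.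
Proof.
move=> se; rewrite /crossing se /= vS setD11 /= andbT below_tgt.
case te: (tgt e) => [//|[w|//]]; apply/negP => wS.
by have := v_top wS; have := node_height_edge e; rewrite se te /=; lra.
Qed.

Lemma crossing_in e : tgt e = vnode v -> ~~ crossing S e && crossing S' e.
Proof.
move=> te; rewrite /crossing te /= vS setD11 /= andbF andbT below_setD1.
  exact: closedS te vS.
by apply/eqP => se; apply: (src_neq_tgt (e := e)); rewrite se te.
Qed.

Lemma crossing_other e :
  src e != vnode v -> tgt e != vnode v -> crossing S' e = crossing S e.
Proof. by move=> se te; rewrite /crossing !below_setD1. Qed.

Lemma down_closed_setD1 : down_closed S'.
Proof.
move=> e w te; rewrite in_setD1 => /andP[wv wS]; rewrite below_setD1.
  exact: closedS te wS.
apply/eqP => se; have := v_top wS; have := node_height_edge e; rewrite se te /=; lra.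
Qed.

Let common := [seq e <- enum E | crossing S e && crossing S' e].

Lemma perm_cut : perm_eq (cut S) (common ++ out_edges v).
Proof.
apply: uniq_perm => [||e]; first exact/filter_uniq/enum_uniq.
  rewrite cat_uniq (proj2 (edges_uniq v)) andbT; apply/andP; split.
    exact/filter_uniq/enum_uniq.
  apply/hasPn => e /[!mem_out_edges] /eqP /crossing_out /andP[_].
  by rewrite mem_filter => /negbTE->; rewrite andbF.
rewrite mem_cat /cut /common !(mem_filter _ e (enum E)) mem_enum !andbT mem_out_edges.
have [se | sne] := eqVneq (src e) (vnode v).
  by rewrite orbT; case/andP: (crossing_out se).
have [te | tne] := eqVneq (tgt e) (vnode v).
  by case/andP: (crossing_in te) => /negbTE->.
by rewrite orbF (crossing_other sne tne) andbb.
Qed.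

Lemma perm_cut_setD1 : perm_eq (cut S') (common ++ in_edges v).
Proof.
apply: uniq_perm => [||e]; first exact/filter_uniq/enum_uniq.
  rewrite cat_uniq (proj1 (edges_uniq v)) andbT; apply/andP; split.
    exact/filter_uniq/enum_uniq.
  apply/hasPn => e /[!mem_in_edges] /eqP /crossing_in /andP[].
  by rewrite mem_filter => /negbTE->.
rewrite mem_cat /cut /common !(mem_filter _ e (enum E)) mem_enum !andbT mem_in_edges.
have [te | tne] := eqVneq (tgt e) (vnode v).
  by rewrite orbT; case/andP: (crossing_in te).
have [se | sne] := eqVneq (src e) (vnode v).
  by case/andP: (crossing_out se) => _ /negbTE->; rewrite andbF.
by rewrite orbF (crossing_other sne tne) andbb.
Qed.

Lemma cut_remove_top : K0eq (map fib (cut S')) (map fib (cut S)).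
Proof.
apply: (rst_trans (map fib (common ++ in_edges v))).
  exact/K0eq_Permutation/Permutation_map/PermutationP/perm_cut_setD1.
apply: (rst_trans (map fib (common ++ out_edges v))).
  by rewrite !map_cat; apply: K0eq_cat rst_refl (K0eq_vertex v).
exact/rst_sym/K0eq_Permutation/Permutation_map/PermutationP/perm_cut.
Qed.

End RemoveTop.

Lemma cut_down_closed S : down_closed S -> K0eq (labels M0) (map fib (cut S)).
Proof.
move: {2}#|S| (erefl #|S|) => n; elim: n S => [|n IH] S cardS closedS.
  by move/eqP: cardS; rewrite cards_eq0 => /eqP->; exact: cut_set0.
have [v0 v0S] : exists v0, v0 \in S by apply/set0Pn; rewrite -card_gt0 cardS.
have [v] := exists_max_seq ht (etrans (mem_enum S v0) v0S).
rewrite mem_enum => vS v_top; have {}v_top w : w \in S -> Rle (ht w) (ht v).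
  by move=> wS; apply: v_top; rewrite mem_enum.
apply: rst_trans _ _ (cut_remove_top vS closedS v_top).
apply: (IH _ _ (down_closed_setD1 closedS v_top)).
by move: cardS; rewrite (cardsD1 v) vS => -[].
Qed.

Lemma K0eq_of_cob : K0eq (labels M0) (labels M1).
Proof.
apply: rst_trans _ _ (rst_sym cut_setT).
by apply: cut_down_closed => e w _ _; apply: below_setT_src.
Qed.

End Sweep.

Section Cobordisms.
Variables (C : PreCat) (HC : is_abelian C).

Lemma relabel_cob (M N : Foam0 C) (g : pts M -> pts N) :
  bijective g -> (forall p, lab N (g p) = lab M p) -> inhabited (BraidCob C M N).
Proof.
move=> [g' gK g'K] lab_g; constructor.
refine (@Build_BraidCob C M N void (pts M) inl (fun p => inr (inr (g p))) (lab M)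
  (fun v => match v with end) (fun v => match v with end) (fun v => match v with end)
  (fun v => match v with end) (fun v => match v with end) _ _ _ _ _ _ _ _ _ _);
  try by case.
- by move=> p; exists p; split => // e [[->] | //].
- move=> q; exists (g' q); split; first by rewrite g'K.
  by move=> e [// | [<-]]; rewrite gK.
- by move=> p e [<-]; apply: isomorphic_refl HC _.
- by move=> q e [<-]; rewrite lab_g; apply: isomorphic_refl HC _.
- by move=> e; apply: Rlt_0_1.
Qed.

Definition foam_single (X : Ob C) : Foam0 C := @Build_Foam0 C unit (fun _ => X).

Definition foam_pair (X Y : Ob C) : Foam0 C :=
  @Build_Foam0 C bool (fun b => if b then X else Y).

Lemma ses_cob (A : Foam0 C) (X1 X2 X3 : Ob C) : ses_exists X1 X2 X3 ->
  inhabited (BraidCob C (foam_union (foam_single X2) A) (foam_union (foam_pair X1 X3) A)).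
Proof.
move=> ses.
(* Edges: the thick edge into the vertex, the two thin edges out of it, and a
   strand for each point of A. *)
pose edge := (((unit + bool) + pts A)%type : finType).
pose node := ((unit + pts A) + (unit + (bool + pts A)))%type.
pose src (e : edge) : node := match e with
  | inl (inl _) => inl (inl tt) | inl (inr _) => inr (inl tt) | inr a => inl (inr a) end.
pose tgt (e : edge) : node := match e with
  | inl (inl _) => inr (inl tt) | inl (inr b) => inr (inr (inl b))
  | inr a => inr (inr (inr a)) end.
pose fib (e : edge) : Ob C := match e with
  | inl (inl _) => X2 | inl (inr b) => if b then X1 else X3 | inr a => lab A a end.
constructor.
refine (@Build_BraidCob C (foam_union (foam_single X2) A) (foam_union (foam_pair X1 X3) A)
  unit edge src tgt fib (fun _ => (/2)%R) (fun _ => false)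
  (fun _ => inl (inr true)) (fun _ => inl (inr false)) (fun _ => inl (inl tt))
  _ _ _ _ _ _ _ _ _ _).
- case=> [[]|a].
    by exists (inl (inl tt)); split => // -[[[]|b]|a'] /= [] H; inversion H.
  by exists (inr a); split => // -[[[]|b]|a'] /= [] H; inversion H.
- case=> [b|a].
    by exists (inl (inr b)); split => // -[[[]|b']|a'] /= [] H; inversion H.
  by exists (inr a); split => // -[[[]|b']|a'] /= [] H; inversion H.
- case=> [[]|a] [[[]|b]|a'] //= H; inversion H; subst; exact: isomorphic_refl HC _.
- case=> [b|a] [[[]|b']|a'] //= H; inversion H; subst; exact: isomorphic_refl HC _.
- by move=> _; split.
- by move=> [].
- move=> [] [[[]|[]]|a] //= [] //; by [constructor 1|constructor 2|constructor 3].
- by move=> _.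
- by move=> _; split; lra.
- case=> [[[]|b]|a] /=; lra.
Qed.

Definition foam_of_seq (s : seq (Ob C)) : Foam0 C :=
  @Build_Foam0 C 'I_(size s) (tnth (in_tuple s)).

Lemma labels_foam_of_seq s : labels (foam_of_seq s) = s.
Proof. exact: map_tnth_enum. Qed.

Lemma labels_union (M N : Foam0 C) : labels (foam_union M N) = labels M ++ labels N.
Proof. by rewrite /labels /= [in LHS]enumT unlock /= /sum_enum -!enumT map_cat -!map_comp. Qed.

Lemma labels_single X : labels (foam_single X) = [:: X].
Proof. by rewrite /labels enumT unlock. Qed.

Lemma labels_pair X Y : labels (foam_pair X Y) = [:: X; Y].
Proof. by rewrite /labels enumT unlock. Qed.

Lemma labels_foam_empty : labels (@foam_empty C) = [::].
Proof. by rewrite /labels enumT unlock. Qed.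

Lemma cob_equiv_Permutation (M N : Foam0 C) :
  Permutation (labels M) (labels N) -> cob_equiv M N.
Proof. by case/Permutation_map_bij=> g g_bij lab_g; apply/rst_step/(relabel_cob g_bij lab_g). Qed.

Lemma cob_equiv_foam_of_seq s t : K0eq s t -> cob_equiv (foam_of_seq s) (foam_of_seq t).
Proof.
elim=> {s t} [s t [s' t' st | l r X1 X2 X3 ses] | s | s t _ IH | s t u _ IH1 _ IH2].
- by apply: cob_equiv_Permutation; rewrite !labels_foam_of_seq.
- pose A := foam_of_seq (l ++ r).
  apply: (rst_trans (foam_union (foam_single X2) A)).
    apply: cob_equiv_Permutation; rewrite labels_union labels_single !labels_foam_of_seq.
    exact/Permutation_sym/Permutation_middle.
  apply: (rst_trans (foam_union (foam_pair X1 X3) A)); first exact/rst_step/ses_cob.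
  apply: cob_equiv_Permutation; rewrite labels_union labels_pair !labels_foam_of_seq.
  exact: (Permutation_app_swap_app [:: X1; X3]).
- exact: rst_refl.
- exact: rst_sym.
- exact: rst_trans _ IH1 IH2.
Qed.

Lemma cob_equiv_foam_of_labels (M : Foam0 C) : cob_equiv M (foam_of_seq (labels M)).
Proof. by apply: cob_equiv_Permutation; rewrite labels_foam_of_seq. Qed.

Lemma cob_equiv_of_K0eq (M N : Foam0 C) : K0eq (labels M) (labels N) -> cob_equiv M N.
Proof.
move=> /cob_equiv_foam_of_seq MN.
apply: rst_trans _ (cob_equiv_foam_of_labels M) _.
exact: rst_trans _ MN (rst_sym (cob_equiv_foam_of_labels N)).
Qed.

Lemma K0eq_of_cob_equiv (M N : Foam0 C) : cob_equiv M N -> K0eq (labels M) (labels N).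
Proof.
elim=> [M' N' [B] | M' | M' N' _ IH | M' L N' _ IH1 _ IH2].
- exact: (K0eq_of_cob HC B).
- exact: rst_refl.
- exact: rst_sym.
- exact: rst_trans _ IH1 IH2.
Qed.

End Cobordisms.

Theorem mainTheorem6 (C : PreCat) (HC : is_abelian C) :
  [/\ (forall M N : Foam0 C, cob_equiv M N -> K0eq (labels M) (labels N)),
      (forall M N : Foam0 C, K0eq (labels M) (labels N) -> cob_equiv M N),
      (forall s : seq (Ob C), exists M : Foam0 C, K0eq (labels M) s),
      (forall M N : Foam0 C,
          K0eq (labels (foam_union M N)) (labels M ++ labels N))
    & labels (@foam_empty C) = [::]].
Proof.
split.
- exact: K0eq_of_cob_equiv.
- exact: cob_equiv_of_K0eq.
- by move=> s; exists (foam_of_seq s); rewrite labels_foam_of_seq; apply: rst_refl.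
- by move=> M N; rewrite labels_union; apply: rst_refl.
- exact: labels_foam_empty.
Qed.
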